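(* Let $k$ be a positive integer and let $\sigma\in S_n$ have at least one $k$th root. Let $\ell_1,\dots,\ell_m$ be the distinct cycle lengths occurring in the disjoint cycle decomposition of $\sigma$ (fixed points counted as cycles of length $1$), and for each $i$ let $M_i\subseteq\{1,\dots,n\}$ be the set of points lying in cycles of $\sigma$ of length $\ell_i$ and $\sigma_i$ the restriction of $\sigma$ to $M_i$, viewed as a permutation of $M_i$. Then \[ \operatorname{re}_k(\sigma)-\operatorname{ro}_k(\sigma)=\prod_{i=1}^m\big(\operatorname{re}_k(\sigma_i)-\operatorname{ro}_k(\sigma_i)\big), \] where $\operatorname{re}_k(\sigma)$, $\operatorname{ro}_k(\sigma)$ are counted in $S_n$ and $\operatorname{re}_k(\sigma_i)$, $\operatorname{ro}_k(\sigma_i)$ are counted in the symmetric group on $M_i$.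
   Context: For a permutation $\pi$ of a finite set $M$, a $k$th root of $\pi$ is a permutation $\tau$ of $M$ with $\tau^k=\pi$. $\operatorname{re}_k(\pi)$ (resp. $\operatorname{ro}_k(\pi)$) denotes the number of $k$th roots of $\pi$ that are even (resp. odd) permutations of $M$. *)

From HB Require Import structures.
From mathcomp Require Import all_boot all_order all_algebra all_fingroup.
Set Implicit Arguments. Unset Strict Implicit. Unset Printing Implicit Defensive.
Import GRing.Theory.

Definition re (k : nat) (T : finType) (s : {perm T}) : nat :=
  #|[set t : {perm T} | (t ^+ k == s)%g && ~~ odd_perm t]|.
Definition ro (k : nat) (T : finType) (s : {perm T}) : nat :=
  #|[set t : {perm T} | (t ^+ k == s)%g && odd_perm t]|.

(* Restriction of s to a subset M, as a permutation of the finite type of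
   elements of M.  (When M is s-stable, the underlying function is injective
   and this is the genuine restriction; otherwise a junk value 1.) *)
Definition restr_fun (T : finType) (M : {set T}) (s : {perm T})
  (x : {x : T | x \in M}) : {x : T | x \in M} := insubd x (s (val x)).

Definition restr_sub (T : finType) (M : {set T}) (s : {perm T})
  : {perm {x : T | x \in M}} :=
  match @injectiveP _ _ (@restr_fun T M s) with
  | ReflectT h => perm h
  | ReflectF _ => 1%g
  end.

Definition cyc_pts (T : finType) (s : {perm T}) (l : nat) : {set T} :=
  [set x | #|porbit s x| == l].

Definition cyc_lengths (T : finType) (s : {perm T}) : seq nat :=
  undup [seq #|porbit s x| | x <- enum T].

From HB Require Import structures.
From mathcomp Require Import all_boot all_order all_algebra all_fingroup.
Import GRing.Theory.
Set Implicit Arguments. Unset Strict Implicit.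

(* Write re_k - ro_k as the signed count of k-th roots, each root weighted by
   its sign.  A root t of s commutes with s, hence maps every cycle of s onto
   a cycle of the same length: t stabilises each class M_l.  So t is the
   product of its restrictions to the M_l, each a k-th root of s_l, and
   conversely every such product is a root; the sign being multiplicative,
   the signed count factorises over the classes.  Finally, roots supported
   on M_l correspond to roots of s_l in Sym(M_l), with the same sign. *)

Section StablePerms.
Local Open Scope group_scope.
Variable T : finType.
Implicit Types (u r s : {perm T}) (S A M B : {set T}).

Lemma astabs_perm u S : {in S, forall x, u x \in S} -> u \in 'N(S | 'P).
Proof.
move=> uS; apply/astabsP => x /=; rewrite apermE.
apply/idP/idP => [uxS|]; last exact: uS.
have uSS : u @: S = S.
  apply/eqP; rewrite eqEcard (card_imset _ perm_inj) leqnn andbT.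
  by apply/subsetP => _ /imsetP[y yS ->]; apply: uS.
by rewrite -uSS (mem_imset _ _ perm_inj) in uxS.
Qed.

Lemma astabs_perm_closed S u x : u \in 'N(S | 'P) -> (u x \in S) = (x \in S).
Proof. exact: astabs_act. Qed.

Lemma perm_on_astabs S u : perm_on S u -> u \in 'N(S | 'P).
Proof. by move=> uS; apply: astabs_perm => x xS; rewrite perm_closed. Qed.

Lemma perm_on_astabs_disjoint M B u :
  [disjoint M & B] -> perm_on B u -> u \in 'N(M | 'P).
Proof.
move=> dMB uB; apply: astabs_perm => x xM.
by rewrite (out_perm uB) // (disjointFr dMB xM).
Qed.

Lemma restr_permEif S u x : u \in 'N(S | 'P) ->
  restr_perm S u x = if x \in S then u x else x.
Proof.
move=> uS; case: ifP => xS; first by rewrite restr_permE.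
by rewrite (out_perm (restr_perm_on _ _)) ?xS.
Qed.

Lemma restr_permX S u n : u \in 'N(S | 'P) ->
  restr_perm S u ^+ n = restr_perm S (u ^+ n).
Proof. by move=> uS; rewrite (morphX (restr_perm_morphism S) n uS). Qed.

Lemma restr_permT s : restr_perm [set: T] s = s.
Proof.
have sT : s \in 'N([set: T] | 'P) by apply: astabs_perm => x; rewrite inE.
by apply/permP => x; rewrite restr_permEif // inE.
Qed.

Lemma restr_perm_restr_perm S A s : S \subset A ->
  s \in 'N(S | 'P) -> s \in 'N(A | 'P) ->
  restr_perm S (restr_perm A s) = restr_perm S s.
Proof.
move=> sSA sS sA.
have rS x : x \in S -> restr_perm A s x = s x.
  by move=> xS; rewrite restr_permE // (subsetP sSA).
have rAS : restr_perm A s \in 'N(S | 'P).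
  by apply: astabs_perm => x xS; rewrite rS // (astabs_perm_closed x sS).
by apply/permP => x; rewrite !restr_permEif //; case: ifP => // /(subsetP sSA) ->.
Qed.

Lemma restr_perm_mul_disjoint M B u v : [disjoint M & B] ->
  perm_on M u -> perm_on B v -> restr_perm M (u * v) = u.
Proof.
move=> dMB uM vB.
have uvM : u * v \in 'N(M | 'P).
  by apply: groupM; [exact: perm_on_astabs | exact: perm_on_astabs_disjoint vB].
apply/permP => x; rewrite restr_permEif // permM; case: ifP => xM.
  by rewrite (out_perm vB) // (disjointFr dMB) ?perm_closed.
by rewrite (out_perm uM) ?xM.
Qed.

Lemma porbit_restr_perm S s x : s \in 'N(S | 'P) -> x \in S ->
  porbit (restr_perm S s) x = porbit s x.
Proof.
move=> sS xS; apply/setP => y.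
by apply/porbitP/porbitP => -[i ->]; exists i;
  rewrite restr_permX // restr_permEif ?xS // groupX.
Qed.

Lemma porbit_commute u r x : commute u r -> porbit r (u x) = u @: porbit r x.
Proof.
move=> cur.
have rXu i : (r ^+ i) (u x) = u ((r ^+ i) x).
  by rewrite -permM (commuteX i cur) permM.
apply/setP => y; apply/porbitP/imsetP => [[i ->]|[_ /porbitP[i ->] ->]].
  by exists ((r ^+ i) x); [exact: mem_porbit | exact: rXu].
by exists i; rewrite rXu.
Qed.

Lemma card_porbit_commute u r x :
  commute u r -> #|porbit r (u x)| = #|porbit r x|.
Proof. by move=> cur; rewrite porbit_commute // (card_imset _ perm_inj). Qed.

End StablePerms.

Local Open Scope ring_scope.

Definition signed_roots (T : finType) k (s : {perm T}) : int :=
  \sum_(t : {perm T} | (t ^+ k)%g == s) (-1) ^+ odd_perm t.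

Definition signed_roots_on (T : finType) k (s : {perm T}) (A : {set T}) : int :=
  \sum_(t : {perm T} | perm_on A t && ((t ^+ k)%g == restr_perm A s))
     (-1) ^+ odd_perm t.

Section SignedRoots.
Variables (T : finType) (k : nat).
Implicit Types (s : {perm T}) (M B : {set T}).

Lemma re_sub_ro s : (re k s)%:Z - (ro k s)%:Z = signed_roots k s.
Proof.
rewrite /signed_roots (bigID (fun t : {perm T} => odd_perm t)) /= addrC.
rewrite (eq_bigr (fun _ => 1)); last by move=> t /andP[_ /negbTE ->].
rewrite [X in _ = _ + X](eq_bigr (fun _ => -1)); last by move=> t /andP[_ ->].
by rewrite !sumr_const /re /ro !cardsE mulNrn !natz.
Qed.

Lemma signed_roots_on_setT s : signed_roots_on k s [set: T] = signed_roots k s.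
Proof.
rewrite /signed_roots_on restr_permT; apply: eq_bigl => t.
by rewrite (_ : perm_on _ t) //; apply/subsetP => x; rewrite inE.
Qed.

Lemma signed_roots_on_set0 s : signed_roots_on k s set0 = 1.
Proof.
have on0 (t : {perm T}) : perm_on set0 t -> t = 1%g by move/perm_on_id; apply; rewrite cards0.
rewrite /signed_roots_on (on0 _ (restr_perm_on _ _)) (big_pred1 1%g) ?odd_perm1 //.
move=> t /=; apply/andP/eqP => [[/on0 //]|->].
by rewrite expg1n perm_on1.
Qed.

Local Open Scope group_scope.

Lemma signed_roots_onU s M B :
  [disjoint M & B] -> s \in 'N(M | 'P) -> s \in 'N(B | 'P) ->
  (forall t, perm_on (M :|: B) t -> t ^+ k = restr_perm (M :|: B) s ->
     t \in 'N(M | 'P)) ->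
  signed_roots_on k s (M :|: B) = (signed_roots_on k s M * signed_roots_on k s B)%R.
Proof.
move=> dMB sM sB rootM; set A := M :|: B.
have /andP[sMA sBA] : (M \subset A) && (B \subset A) by rewrite -subUset.
have sA : s \in 'N(A | 'P) by apply: (subsetP (astabsU _ M B)); rewrite inE sM.
have astabsB t : perm_on A t -> t \in 'N(M | 'P) -> t \in 'N(B | 'P).
  move=> tA tM; have -> : B = A :\: M.
    by rewrite setDUl setDv set0U; apply/esym/setDidPl; rewrite disjoint_sym.
  by apply: (subsetP (astabsD _ A M)); rewrite inE perm_on_astabs.
have restr_split t : perm_on A t -> t \in 'N(M | 'P) ->
    restr_perm M t * restr_perm B t = t.
  move=> tA tM; apply/permP => x; rewrite permM !restr_permEif ?astabsB //.
  have [xM | xM] := boolP (x \in M).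
    by rewrite (disjointFr dMB) // (astabs_perm_closed x tM).
  by case: ifP => // /negbT xB; rewrite (out_perm tA) // inE negb_or xM.
have sAMB : restr_perm A s = restr_perm M s * restr_perm B s.
  apply/permP => x; rewrite permM !restr_permEif // !inE.
  have [xM | //] := boolP (x \in M).
  by rewrite (disjointFr dMB (_ : s x \in M)) // astabs_perm_closed.
rewrite /signed_roots_on big_distrlr /= pair_big_dep /=.
rewrite (reindex_onto (fun p : {perm T} * {perm T} => p.1 * p.2)
                     (fun t => (restr_perm M t, restr_perm B t))); last first.
  by move=> t /andP[tA /eqP tk]; rewrite restr_split // rootM.
apply: eq_big => [[u v]|[u v] _] /=; last by rewrite odd_permM signr_addb.
apply/idP/idP.
  set t := u * v; case/andP=> /andP[tA /eqP tk] /eqP[<- <-].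
  have tM := rootM _ tA tk; have tB := astabsB _ tA tM.
  rewrite !restr_perm_on !restr_permX // tk.
  by rewrite !restr_perm_restr_perm ?eqxx.
case/andP=> /andP[uM /eqP uk] /andP[vB /eqP vk].
have cuv : commute u v := perm_onC uM vB dMB.
rewrite (restr_perm_mul_disjoint dMB uM vB) [in restr_perm B _]cuv.
rewrite (restr_perm_mul_disjoint _ vB uM) 1?disjoint_sym // eqxx andbT.
rewrite perm_onM /=; [|exact: subset_trans uM sMA|exact: subset_trans vB sBA].
by rewrite expgMn // uk vk sAMB.
Qed.

End SignedRoots.

Section CycleClasses.
Local Open Scope group_scope.
Variables (T : finType) (k : nat).
Implicit Types (s u : {perm T}) (A : {set T}) (L : seq nat).

Definition cyc_pts_in s L : {set T} := [set x | #|porbit s x| \in L].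

Lemma card_porbit_perm s x : #|porbit s (s x)| = #|porbit s x|.
Proof. by rewrite -[s x]/(aperm x (s ^+ 1)) porbit_perm. Qed.

Lemma astabs_cyc_pts_in s L : s \in 'N(cyc_pts_in s L | 'P).
Proof. by apply: astabs_perm => x; rewrite !inE card_porbit_perm. Qed.

Lemma astabs_cyc_pts s l : s \in 'N(cyc_pts s l | 'P).
Proof. by apply: astabs_perm => x; rewrite !inE card_porbit_perm. Qed.

Lemma commute_astabs_cyc_pts s A u l :
  s \in 'N(A | 'P) -> cyc_pts s l \subset A -> perm_on A u ->
  commute u (restr_perm A s) -> u \in 'N(cyc_pts s l | 'P).
Proof.
move=> sA lA uA cus; apply: astabs_perm => x xl.
have xA := subsetP lA x xl.
have uxA : u x \in A by rewrite perm_closed.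
have := card_porbit_commute x cus.
by rewrite !porbit_restr_perm // !inE => ->; rewrite inE in xl.
Qed.

Lemma signed_roots_on_cyc_pts_in s L : uniq L ->
  signed_roots_on k s (cyc_pts_in s L) =
  (\prod_(l <- L) signed_roots_on k s (cyc_pts s l))%R.
Proof.
elim: L => [_|l L IH /= /andP[lL uL]].
  by rewrite big_nil -(signed_roots_on_set0 k s); congr signed_roots_on;
    apply/setP => x; rewrite !inE.
have -> : cyc_pts_in s (l :: L) = cyc_pts s l :|: cyc_pts_in s L.
  by apply/setP => x; rewrite !inE.
rewrite big_cons -IH //; apply: signed_roots_onU.
- rewrite -setI_eq0; apply/eqP/setP => x; rewrite !inE.
  by case: eqP => // ->; rewrite (negbTE lL).
- exact: astabs_cyc_pts.
- exact: astabs_cyc_pts_in.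
move=> u uA uk; apply: commute_astabs_cyc_pts uA _ => //.
- by apply: (subsetP (astabsU _ _ _)); rewrite inE astabs_cyc_pts astabs_cyc_pts_in.
- exact: subsetUl.
- by rewrite -uk; apply: commuteX.
Qed.

Lemma cyc_pts_in_lengths s : cyc_pts_in s (cyc_lengths s) = [set: T].
Proof.
by apply/setP => x; rewrite !inE mem_undup map_f ?mem_enum.
Qed.

End CycleClasses.

Section ExtendPerm.
Local Open Scope group_scope.
Variables (T : finType) (M : {set T}).
Local Notation sub := {x : T | x \in M}.

Definition extend_fun (v : {perm sub}) (x : T) : T :=
  if insub x is Some y then val (v y) else x.

Lemma extend_fun_inj v : injective (extend_fun v).
Proof.
move=> x1 x2; rewrite /extend_fun.
case: insubP => [y1 _ <-|x1M]; case: insubP => [y2 _ <-|x2M] //.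
- by move/val_inj/perm_inj => ->.
- by move=> e; move: x2M; rewrite -e (valP (v y1)).
- by move=> e; move: x1M; rewrite e (valP (v y2)).
Qed.

Definition extend_perm v : {perm T} := perm (@extend_fun_inj v).

Lemma extend_permE v y : extend_perm v (val y) = val (v y).
Proof. by rewrite permE /extend_fun valK. Qed.

Lemma extend_perm_out v x : x \notin M -> extend_perm v x = x.
Proof. by move=> xM; rewrite permE /extend_fun insubN. Qed.

Lemma extend_perm_on v : perm_on M (extend_perm v).
Proof.
by apply/subsetP => x; rewrite inE; apply: contraR => /extend_perm_out ->.
Qed.

Lemma sub_or_out (P : T -> Prop) :
  (forall y : sub, P (val y)) -> (forall x, x \notin M -> P x) -> forall x, P x.
Proof. by move=> Psub Pout x; case: (insubP sub x) => [y _ <-|]; auto. Qed.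

Lemma extend_permM v w :
  extend_perm (v * w) = extend_perm v * extend_perm w.
Proof.
apply/permP; apply: sub_or_out => [y|x xM]; last by rewrite permM !extend_perm_out.
by rewrite permM !extend_permE permM.
Qed.

Lemma extend_perm1 : extend_perm 1 = 1.
Proof.
apply/permP; apply: sub_or_out => [y|x xM]; last by rewrite extend_perm_out ?perm1.
by rewrite extend_permE !perm1.
Qed.

Lemma extend_permX v n : extend_perm (v ^+ n) = extend_perm v ^+ n.
Proof.
by elim: n => [|n IH]; rewrite ?expg0 ?extend_perm1 // !expgS extend_permM IH.
Qed.

Lemma extend_perm_inj : injective extend_perm.
Proof.
move=> v w evw; apply/permP => y; apply: val_inj.
by rewrite -!extend_permE evw.
Qed.

Lemma extend_perm_tperm a b : extend_perm (tperm a b) = tperm (val a) (val b).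
Proof.
apply/permP; apply: sub_or_out => [y|x xM].
  by rewrite extend_permE (inj_tperm _ _ _ val_inj).
by rewrite extend_perm_out // tpermD //; apply: contraNneq xM => <-; apply: valP.
Qed.

Lemma odd_extend_perm v : odd_perm (extend_perm v) = odd_perm v.
Proof.
have [ts -> dts] := prod_tpermP v.
rewrite (big_morph _ extend_permM extend_perm1) odd_perm_prod //.
rewrite (eq_bigr (fun t => tperm (val t.1) (val t.2))); last first.
  by move=> t _; apply: extend_perm_tperm.
rewrite -(big_map (fun t : sub * sub => (val t.1, val t.2)) xpredT
                  (fun t => tperm t.1 t.2)).
rewrite odd_perm_prod ?size_map // all_map.
by apply: sub_all dts => t; rewrite /dpair /= (inj_eq val_inj).
Qed.

Lemma restr_sub_val u y : u \in 'N(M | 'P) -> val (restr_sub M u y) = u (val y).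
Proof.
move=> uM; have uinj : injective (@restr_fun T M u).
  move=> y1 y2 /(congr1 val); rewrite /restr_fun !val_insubd.
  by rewrite !astabs_perm_closed // (valP y1) (valP y2) => /perm_inj /val_inj.
rewrite /restr_sub; case: injectiveP => [uinj' | /(_ uinj)//].
by rewrite permE /restr_fun val_insubd astabs_perm_closed // (valP y).
Qed.

Lemma extend_restr_sub u : perm_on M u -> extend_perm (restr_sub M u) = u.
Proof.
move=> uM; apply/permP; apply: sub_or_out => [y|x xM].
  by rewrite extend_permE restr_sub_val // perm_on_astabs.
by rewrite extend_perm_out // (out_perm uM).
Qed.

Lemma restr_sub_extend v : restr_sub M (extend_perm v) = v.
Proof.
apply/permP => y; apply: val_inj.
by rewrite restr_sub_val ?extend_permE // perm_on_astabs ?extend_perm_on.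
Qed.

Lemma extend_restr_sub_astabs s : s \in 'N(M | 'P) ->
  extend_perm (restr_sub M s) = restr_perm M s.
Proof.
move=> sM; apply/permP; apply: sub_or_out => [y|x xM].
  by rewrite extend_permE restr_sub_val // restr_permE ?(valP y).
by rewrite extend_perm_out // restr_permEif // (negbTE xM).
Qed.

Lemma signed_roots_on_restr_sub k s : s \in 'N(M | 'P) ->
  signed_roots_on k s M = signed_roots k (restr_sub M s).
Proof.
move=> sM; rewrite /signed_roots_on /signed_roots.
rewrite (reindex_onto extend_perm (restr_sub M)); last first.
  by move=> u /andP[uM _]; apply: extend_restr_sub.
apply: eq_big => [v|v _]; last by rewrite odd_extend_perm.
rewrite extend_perm_on restr_sub_extend eqxx andbT /=.
by rewrite -extend_permX -(extend_restr_sub_astabs sM) (inj_eq extend_perm_inj).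
Qed.

End ExtendPerm.

Theorem lemma1 (n k : nat) (s : {perm 'I_n}) :
  (0 < k)%N ->
  (exists t : {perm 'I_n}, (t ^+ k)%g = s) ->
  (re k s)%:Z - (ro k s)%:Z =
  \prod_(l <- cyc_lengths s)
     ((re k (restr_sub (cyc_pts s l) s))%:Z - (ro k (restr_sub (cyc_pts s l) s))%:Z).
Proof.
move=> _ _.
rewrite re_sub_ro -signed_roots_on_setT -(cyc_pts_in_lengths s).
rewrite signed_roots_on_cyc_pts_in ?undup_uniq //.
by apply: eq_bigr => l _; rewrite re_sub_ro signed_roots_on_restr_sub ?astabs_cyc_pts.
Qed.
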